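(* Fix $s\in\mathbb N$ with $s\ge2$, $q\in\mathbb N\cup\{0\}$, and indices $\alpha_1,\dots,\alpha_q\in\{1,\dots,s\}$ (not necessarily distinct). For $\eta\in\mathbb N$ with $\eta\ge s$ and distinct reals $w_1,\dots,w_s$, $$\sum_{\substack{x_1+\dots+x_s=\eta\\ x_1,\dots,x_s\ge 1}} x_{\alpha_1}\cdots x_{\alpha_q}\, w_1^{x_1}\cdots w_s^{x_s}=\frac{\sum_{l=1}^s w_l^{\eta+2-s}f_{l,\eta}(w_1,\dots,w_s)}{\left(\prod_{1\le i<j\le s}(w_i-w_j)\right)^{2^q}},$$ where each $f_{l,\eta}\in\mathbb R[\eta][w_1,\dots,w_s]$ is homogeneous in $w_1,\dots,w_s$ of degree $2^q\binom{s}{2}+s-2$, and its coefficients are polynomials in $\eta$ of degree at most $q$.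
   Context: The sum runs over integer tuples $(x_1,\dots,x_s)$. *)

From mathcomp Require Import all_boot all_algebra.
From mathcomp Require Import Rstruct.
From mathcomp Require Import mpoly.
From Stdlib Require Rdefinitions.
Set Implicit Arguments. Unset Strict Implicit. Unset Printing Implicit Defensive.
Import GRing.Theory.
Local Open Scope ring_scope.

Notation Rr := Rdefinitions.R.

Definition composition (s eta : nat) (x : {ffun 'I_s -> 'I_eta.+1}) : bool :=
  [forall i, (0 < (x i : nat))%N] && ((\sum_(i < s) (x i : nat))%N == eta).

Definition lhsA2 (s q eta : nat) (alpha : 'I_q -> 'I_s) (w : 'I_s -> Rr) : Rr :=
  \sum_(x : {ffun 'I_s -> 'I_eta.+1} | composition x)
     (\prod_(j < q) ((x (alpha j) : nat)%:R : Rr)) * \prod_(i < s) w i ^+ (x i : nat).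

Definition vdm (s : nat) (w : 'I_s -> Rr) : Rr :=
  \prod_(i < s) \prod_(j < s | (i < j)%N) (w i - w j).

Definition evalEW (s : nat) (f : {mpoly {poly Rr}[s]}) (eta : Rr) (w : 'I_s -> Rr) : Rr :=
  (map_mpoly (horner_eval eta) f).@[w].

From mathcomp Require Import all_boot all_algebra.
From mathcomp Require Import Rstruct mpoly.
From mathcomp Require Import ring zify.
Set Implicit Arguments. Unset Strict Implicit. Unset Printing Implicit Defensive.
Import GRing.Theory.
Local Open Scope ring_scope.

(* Write S_al(eta; w) for the sum over the compositions x of eta into s
   positive parts of (prod_{a in al} x_a) w_1^x_1 ... w_s^x_s, and
   V = prod_{i<j} (X_i - X_j).  The proof has three steps.
   1. al = [::].  A composition is an exponent vector of degree eta with full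
      support.  Sorting exponent vectors by their support T and lowering the
      exponent of one a in T gives a recursion solved by divided differences:
      S(eta; w) = (prod_i w_i) sum_l w_l^(eta-1) / prod_(j <> l) (w_l - w_j).
      As V = prod_(j <> l) (X_l - X_j) * G_l, multiplying by V clears the
      denominators, first in any field, then for polynomials through their
      field of fractions: V * S = sum_l X_l^(eta+2-s) * X_l^(s-2) (prod_(i<>l) X_i) G_l.
   2. An extra weight x_a is produced by the Euler operator E_a = X_a d/dX_a.
      Applying E_a to V^K S_al = sum_l X_l^(eta+2-s) F_l(eta), with K = 2^|al|,
      and multiplying by V^K gives numerators for a :: al of degree raised by
      K * C(s,2), whose coefficients gain one degree in eta (from E_a X_l^(eta+2-s)).
   3. Evaluating at w and dividing by V(w)^(2^q) != 0 gives the theorem. *)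

Section DividedPowers.
Variables (F : fieldType) (s : nat) (w : 'I_s -> F).
Hypothesis w_inj : injective w.
Implicit Types (T : {set 'I_s}) (a b l : 'I_s).

Definition node_prod (T : {set 'I_s}) (l : 'I_s) : F :=
  \prod_(j in T | j != l) (w l - w j).

(* The divided difference of t^m on the nodes of T; for |T| = k it is the
   complete homogeneous symmetric polynomial of degree m - k + 1 in w(T). *)
Definition dpow (T : {set 'I_s}) (m : nat) : F :=
  \sum_(l in T) w l ^+ m / node_prod T l.

Lemma wsub_neq0 l b : l != b -> w l - w b != 0.
Proof. by move=> lb; rewrite subr_eq0; apply: contra lb => /eqP /w_inj ->. Qed.

Lemma node_prod_neq0 T l : node_prod T l != 0.
Proof. by apply/prodf_neq0 => j /andP[_ jl]; rewrite wsub_neq0 // eq_sym. Qed.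

Lemma node_prodD1 T l b : b \in T -> b != l ->
  node_prod T l = (w l - w b) * node_prod (T :\ b) l.
Proof.
move=> bT bl; rewrite /node_prod (bigD1 b) /= ?bT //; congr (_ * _).
by apply: eq_bigl => j; rewrite in_setD1; case: (j == b); rewrite ?andbF ?andbT.
Qed.

(* Removing one node: the recursion of complete homogeneous polynomials. *)
Lemma dpowS T a m : a \in T -> dpow T m.+1 = w a * dpow T m + dpow (T :\ a) m.
Proof.
move=> aT; apply/eqP; rewrite addrC -subr_eq /dpow mulr_sumr -sumrB.
rewrite (bigD1 a) //= exprS mulrA -mulrBl subrr mul0r add0r.
rewrite [X in _ == X](eq_bigl (fun l => (l \in T) && (l != a))); last first.
  by move=> l; rewrite in_setD1 andbC.
apply/eqP; apply: eq_bigr => l /andP[lT la].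
rewrite (@node_prodD1 T l a) 1?eq_sym //.
have := wsub_neq0 la; have := node_prod_neq0 (T :\ a) l.
move: (node_prod _ _) => P Pn0 dn0.
by rewrite exprS; field; rewrite Pn0 dn0.
Qed.

Lemma dpow_term_diff T a b l m : a \in T -> b \in T -> a != b ->
  (w a - w b) * (w l ^+ m / node_prod T l) =
  (if l != b then w l ^+ m / node_prod (T :\ b) l else 0) -
  (if l != a then w l ^+ m / node_prod (T :\ a) l else 0).
Proof.
move=> aT bT ab; have ba : b != a by rewrite eq_sym.
have [-> | la] := eqVneq l a.
  rewrite ab /= subr0 (@node_prodD1 T a b) //.
  have := wsub_neq0 ab; have := node_prod_neq0 (T :\ b) a.
  by move: (node_prod _ _) => P Pn0 dn0; field; rewrite Pn0 dn0.
have [-> | lb] := eqVneq l b.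
  rewrite /= sub0r (@node_prodD1 T b a) //.
  have := wsub_neq0 ba; have := node_prod_neq0 (T :\ a) b.
  by move: (node_prod _ _) => P Pn0 dn0; field; rewrite Pn0 dn0.
have bTa : b \in T :\ a by rewrite in_setD1 ba.
have aTb : a \in T :\ b by rewrite in_setD1 ab.
rewrite /= (@node_prodD1 T l a) 1?eq_sym // (@node_prodD1 (T :\ a) l b) 1?eq_sym //.
rewrite (@node_prodD1 (T :\ b) l a) 1?eq_sym //.
have -> : T :\ b :\ a = T :\ a :\ b by rewrite !setDDl setUC.
have := wsub_neq0 la; have := wsub_neq0 lb; have := node_prod_neq0 (T :\ a :\ b) l.
by move: (node_prod _ _) => P Pn0 h1 h2; field; rewrite Pn0 h1 h2.
Qed.

Lemma dpow_diff T a b m : a \in T -> b \in T -> a != b ->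
  (w a - w b) * dpow T m = dpow (T :\ b) m - dpow (T :\ a) m.
Proof.
move=> aT bT ab; rewrite /dpow mulr_sumr.
rewrite (eq_bigr _ (fun l _ => dpow_term_diff l m aT bT ab)) sumrB.
by congr (_ - _); rewrite -big_mkcondr; apply: eq_bigl => l; rewrite in_setD1 andbC.
Qed.

Lemma dpow0 T : dpow T 0 = (#|T| == 1)%:R.
Proof.
move: (leqnn #|T|); move: {2}#|T| => n; elim: n T => [|k IH] T.
  by rewrite leqn0 cards_eq0 => /eqP ->; rewrite /dpow big_set0 cards0.
rewrite leq_eqVlt ltnS => /orP[/eqP cT|]; last exact: IH.
case: k IH cT => [|k] IH cT.
  have [a ->] : exists a, T = [set a] by apply/cards1P; rewrite cT.
  rewrite /dpow /node_prod big_set1 big_pred0 ?invr1 ?mulr1 ?cards1 //.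
  by move=> j; rewrite in_set1; case: eqP.
have [a aT] : exists a, a \in T by apply/set0Pn; rewrite -card_gt0 cT.
have cTa : #|T :\ a| = k.+1 by apply/eqP; rewrite -eqSS -cT (cardsD1 a T) aT.
have [b] : exists b, b \in T :\ a by apply/set0Pn; rewrite -card_gt0 cTa.
rewrite in_setD1 => /andP[ba bT].
have cTb : #|T :\ b| = k.+1 by apply/eqP; rewrite -eqSS -cT (cardsD1 b T) bT.
have := dpow_diff 0 aT bT; rewrite eq_sym ba => /(_ isT).
rewrite (IH (T :\ b)) ?cTb // (IH (T :\ a)) ?cTa // subrr => /eqP; rewrite mulf_eq0.
by rewrite (negbTE (wsub_neq0 _)) 1?eq_sym //= cT => /eqP.
Qed.

End DividedPowers.

Section SupportSums.
Variables (R : comNzRingType) (s M : nat) (w : 'I_s -> R).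
Local Notation expvec := {ffun 'I_s -> 'I_M.+1}.
Implicit Types (T : {set 'I_s}) (a i : 'I_s) (x y : expvec).

Definition has_supp T x := [forall i, (0 < x i)%N == (i \in T)].
Definition total x := (\sum_i (x i : nat))%N.
Definition wpow x : R := \prod_i w i ^+ x i.

Definition supp_sum T n : R := \sum_(x | has_supp T x && (total x == n)) wpow x.

Definition has_supp_off a T x := [forall i, (i != a) ==> ((0 < x i)%N == (i \in T))].
Definition total_off a x := (\sum_(i | i != a) (x i : nat))%N.
Definition wpow_off a x : R := \prod_(i | i != a) w i ^+ x i.

Lemma has_suppE a T x :
  has_supp T x = ((0 < x a)%N == (a \in T)) && has_supp_off a T x.
Proof.
apply/forallP/andP => [H|[Ha /forallP H] i].
  by split => //; apply/forallP => i; apply/implyP.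
by have [->|ia] := eqVneq i a; last exact: (implyP (H i)).
Qed.

Lemma totalE a x : total x = (x a + total_off a x)%N.
Proof. by rewrite /total (bigD1 a). Qed.

Lemma wpowE a x : wpow x = w a ^+ x a * wpow_off a x.
Proof. by rewrite /wpow (bigD1 a). Qed.

Lemma has_supp_offD1 a T x : has_supp_off a (T :\ a) x = has_supp_off a T x.
Proof. by apply: eq_forallb => i; rewrite in_setD1; case: eqP. Qed.

Definition setexp x a (k : nat) : expvec := [ffun i => if i == a then inord k else x i].

Lemma setexp_at x a k : (k <= M)%N -> setexp x a k a = k :> nat.
Proof. by move=> kM; rewrite ffunE eqxx inordK. Qed.

Lemma setexp_off x a k i : i != a -> setexp x a k i = x i.
Proof. by move=> ia; rewrite ffunE (negbTE ia). Qed.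

Lemma setexpK x a k k' : setexp (setexp x a k) a k' = setexp x a k'.
Proof. by apply/ffunP => i; rewrite !ffunE; case: (i == a). Qed.

Lemma setexp_id x a : setexp x a (x a) = x.
Proof.
apply/ffunP => i; rewrite ffunE; case: eqP => [->|//].
by apply: val_inj; rewrite /= inordK.
Qed.

Lemma setexp_eq x a k : (k <= M)%N -> (setexp x a k == x) = (x a == k :> nat).
Proof.
move=> kM; apply/eqP/eqP => [<-|xa]; first by rewrite setexp_at.
by rewrite -{2}(setexp_id x a) xa.
Qed.

Lemma has_supp_off_setexp x a T k : has_supp_off a T (setexp x a k) = has_supp_off a T x.
Proof. by apply: eq_forallb => i; case: eqP => // /eqP ia; rewrite setexp_off. Qed.

Lemma total_off_setexp x a k : total_off a (setexp x a k) = total_off a x.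
Proof. by apply: eq_bigr => i ia; rewrite setexp_off. Qed.

Lemma wpow_off_setexp x a k : wpow_off a (setexp x a k) = wpow_off a x.
Proof. by apply: eq_bigr => i ia; rewrite setexp_off. Qed.

(* The terms of supp_sum T n.+1 with exponent 1 at a are w_a times those of
   supp_sum (T :\ a) n, through the bijection x |-> setexp x a 0. *)
Lemma supp_sum_exp1 T a n : a \in T -> (1 <= M)%N ->
  \sum_(x | has_supp T x && (total x == n.+1) && (x a == 1%N :> nat)) wpow x =
  w a * supp_sum (T :\ a) n.
Proof.
move=> aT M1; rewrite mulr_sumr.
rewrite (reindex_onto (fun y => setexp y a 1) (fun x => setexp x a 0)) /=; last first.
  by move=> x /andP[_ /eqP xa]; rewrite setexpK -xa setexp_id.
apply: eq_big => y.
  rewrite setexpK setexp_eq // !(has_suppE a) has_supp_offD1 has_supp_off_setexp.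
  rewrite !(totalE a) total_off_setexp !setexp_at // setD11 aT /=.
  by case: (y a : nat) => [|k] /=; rewrite ?andbF // add1n add0n eqSS andbT andbC.
move=> /andP[_ /eqP ya]; have ya0 : y a = 0%N :> nat by rewrite -ya setexp_at.
by rewrite !(wpowE a) setexp_at // wpow_off_setexp ya0 expr1 expr0 mul1r.
Qed.

(* The terms of supp_sum T n.+1 with exponent at least 2 at a are w_a times those of
   supp_sum T n, through the bijection x |-> setexp x a (x a).-1. *)
Lemma supp_sum_exp2 T a n : a \in T -> (n.+1 <= M)%N ->
  \sum_(x | has_supp T x && (total x == n.+1) && ~~ (x a == 1%N :> nat)) wpow x =
  w a * supp_sum T n.
Proof.
move=> aT nM.
rewrite (reindex_onto (fun y => setexp y a (y a).+1) (fun x => setexp x a (x a).-1)) /=;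
  last first.
  move=> x /andP[/andP[+ _] xa1]; rewrite (has_suppE a) aT => /andP[/eqP xa0 _].
  have xaM := ltn_ord (x a).
  by rewrite setexpK setexp_at ?prednK ?setexp_id //; lia.
rewrite mulr_sumr; symmetry; apply: eq_big => y; last first.
  move=> /andP[_ /eqP sy].
  have yaM : ((y a).+1 <= M)%N by apply: leq_trans nM; rewrite -sy (totalE a) ltnS leq_addr.
  by rewrite !(wpowE a) setexp_at // wpow_off_setexp exprS mulrA.
symmetry; have [yaM|yaM] := leqP (y a).+1 M.
  rewrite setexpK setexp_at // setexp_id eqxx andbT !(has_suppE a) has_supp_off_setexp.
  rewrite !(totalE a) total_off_setexp setexp_at // aT /= addSn eqSS.
  by case: (y a : nat) => [|k] /=; rewrite ?andbF // andbT andbC.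
have ya0 : setexp y a (y a).+1 a = 0%N :> nat.
  by rewrite ffunE eqxx /inord /insubd insubF //= ltnS leqNgt yaM.
rewrite (has_suppE a _ (setexp _ _ _)) ya0 aT /=; symmetry; apply/negbTE.
rewrite negb_and (totalE a) orbC; apply/orP; left; apply/eqP => e.
move: nM; rewrite -e ltnNge => /negP; apply.
by rewrite ltnS in yaM; apply: leq_trans yaM (leq_addr _ _).
Qed.

(* Splitting on whether x_a = 1: the basic recursion for supp_sum. *)
Lemma supp_sumS T a n : a \in T -> (n.+1 <= M)%N ->
  supp_sum T n.+1 = w a * (supp_sum T n + supp_sum (T :\ a) n).
Proof.
move=> aT nM; rewrite /supp_sum (bigID (fun x : expvec => x a == 1%N :> nat)) /=.
rewrite supp_sum_exp1 ?supp_sum_exp2 ?(leq_trans _ nM) //.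
by rewrite mulrDr addrC.
Qed.

Lemma total0 x i : total x = 0%N -> x i = 0%N :> nat.
Proof. by rewrite (totalE i) => /eqP; rewrite addn_eq0 => /andP[/eqP]. Qed.

(* Only the zero vector has degree 0, and its support is empty. *)
Lemma supp_sum0 T : supp_sum T 0 = (T == set0)%:R.
Proof.
rewrite /supp_sum; have [->|/set0Pn [u uT]] := eqVneq T set0.
  rewrite (big_pred1 [ffun _ => ord0]) /=.
    by rewrite /wpow big1 // => i _; rewrite ffunE expr0.
  move=> x /=; apply/andP/eqP => [[_ /eqP x0]|->].
    by apply/ffunP => i; apply: val_inj; rewrite ffunE /= (total0 i x0).
  split; first by apply/forallP => i; rewrite ffunE in_set0.
  by rewrite /total big1 // => i _; rewrite ffunE.
rewrite big_pred0 // => x; apply/negbTE/nandP.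
have [x0|] := eqVneq (total x) 0%N; last by right.
by left; rewrite (has_suppE u) uT (total0 u x0).
Qed.

(* A nonzero vector has nonempty support. *)
Lemma supp_sum_set0 n : (0 < n)%N -> supp_sum set0 n = 0.
Proof.
move=> n0; rewrite /supp_sum big_pred0 // => x; apply/negbTE/nandP.
case sx: (has_supp set0 x); [right | by left].
have x0 : total x = 0%N.
  rewrite /total big1 // => i _; move/forallP: sx => /(_ i).
  by rewrite in_set0; case: (x i) => [[|k] ?].
by rewrite x0 eq_sym -lt0n n0.
Qed.

End SupportSums.

Lemma supp_sum_dpow (F : fieldType) s M (w : 'I_s -> F) (w_inj : injective w) n
    (T : {set 'I_s}) : (n.+1 <= M)%N -> T != set0 ->
  supp_sum M w T n.+1 = (\prod_(i in T) w i) * dpow w T n.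
Proof.
elim: n T => [|n IH] T nM /set0Pn [a aT].
  have T0 : (T == set0) = false by apply/negbTE/set0Pn; exists a.
  rewrite (supp_sumS w aT) // !supp_sum0 T0 add0r dpow0 //.
  rewrite (cardsD1 a T) aT add1n eqSS cards_eq0.
  have [Ta|] := eqVneq (T :\ a) set0; last by rewrite !mulr0.
  have -> : T = [set a] by rewrite -(setD1K aT) Ta setU0.
  by rewrite big_set1 !mulr1.
rewrite (supp_sumS w aT) // (IH T (ltnW nM)); last by apply/set0Pn; exists a.
have -> : supp_sum M w (T :\ a) n.+1 = (\prod_(i in T :\ a) w i) * dpow w (T :\ a) n.
  have [->|Ta] := eqVneq (T :\ a) set0; last exact: IH (ltnW nM) Ta.
  by rewrite supp_sum_set0 // /dpow !big_set0 mulr0.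
by rewrite (dpowS _ _ aT) // (big_setD1 a aT) /=; ring.
Qed.

(* The compositions of eta into s positive parts are the exponent vectors with
   full support and degree eta, whence a partial-fraction closed form. *)
Lemma composition_sum (F : fieldType) (s eta : nat) (w : 'I_s -> F) :
  injective w -> (0 < s)%N -> (0 < eta)%N ->
  \sum_(x : {ffun 'I_s -> 'I_eta.+1} | composition x) \prod_(i < s) w i ^+ x i =
  (\prod_(i < s) w i) * \sum_(l < s) w l ^+ eta.-1 / \prod_(j < s | j != l) (w l - w j).
Proof.
move=> w_inj s0 eta0.
have T0 : [set: 'I_s] != set0 by apply/set0Pn; exists (Ordinal s0).
have := @supp_sum_dpow _ _ eta w w_inj eta.-1 [set: 'I_s].
rewrite prednK // => /(_ (leqnn _) T0).
rewrite /dpow /node_prod => E.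
transitivity (supp_sum eta w [set: 'I_s] eta).
  apply: eq_bigl => x; rewrite /composition /has_supp; congr (_ && _).
  by apply: eq_forallb => i; rewrite in_setT eqb_id.
rewrite E; congr (_ * _); first by apply: eq_bigl => i; rewrite in_setT.
apply: eq_big => [l|l _]; first by rewrite in_setT.
by congr (_ / _); apply: eq_bigl => j; rewrite in_setT.
Qed.

Section EulerOperator.
Variables (K : comNzRingType) (s : nat).
Implicit Types (p q : {mpoly K[s]}) (a : 'I_s).

(* The Euler operator X_a d/dX_a multiplies the coefficient of X^m by m_a; on
   generating functions it inserts the factor x_a into every summand. *)
Definition euler a p : {mpoly K[s]} := 'X_a * p^`M(a).

Lemma eulerE a p m : (euler a p)@_m = p@_m *+ m a.
Proof.
rewrite /euler mulrC; have [ma0|ma_gt0] := posnP (m a).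
  rewrite ma0 mulr0n; apply: memN_msupp_eq0; apply/negP.
  rewrite (perm_mem (msuppMX _ U_(a))) => /mapP[m' _ em].
  by move: ma0; rewrite em mnmDE mnm1E eqxx.
have em : m = (U_(a) + (m - U_(a)))%MM.
  rewrite addmC submK //; apply/mnm_lepP => i; rewrite mnm1E.
  by case: eqP => // <-.
rewrite {1}em mcoeffMX mcoeff_deriv -addmC -em.
by rewrite mnmBE mnm1E eqxx subn1 prednK.
Qed.

Lemma euler_sum a (I : finType) (P : pred I) (F : I -> {mpoly K[s]}) :
  euler a (\sum_(i | P i) F i) = \sum_(i | P i) euler a (F i).
Proof. by rewrite /euler raddf_sum mulr_sumr. Qed.

Lemma eulerZ a c p : euler a (c *: p) = c *: euler a p.
Proof. by rewrite /euler mderivZ scalerAr. Qed.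

Lemma eulerM a p q : euler a (p * q) = euler a p * q + p * euler a q.
Proof. by rewrite /euler mderivM; ring. Qed.

Lemma eulerXn a p k : euler a (p ^+ k.+1) = (p ^+ k * euler a p) *+ k.+1.
Proof.
elim: k => [|k IH]; first by rewrite expr1 expr0 mul1r.
by rewrite exprS eulerM IH mulrnAr mulrA -exprS [euler a p * _]mulrC -mulrS.
Qed.

Lemma euler_monom a m : euler a 'X_[m] = (m a)%:R *: 'X_[m].
Proof.
apply/mpolyP => k; rewrite eulerE mcoeffZ !mcoeffX.
by case: eqP => [->|_]; rewrite ?mulr0 ?mul0rn // mulr1 mulr1n.
Qed.

Lemma euler_Xn a (l : 'I_s) n : euler a ('X_l ^+ n) = ((l == a) * n)%:R *: 'X_l ^+ n.
Proof. by rewrite mpolyXn euler_monom mulmnE mnm1E. Qed.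

Lemma euler_homog a d p : p \is d.-homog -> euler a p \is d.-homog.
Proof.
move=> /dhomogP Hp; apply/dhomogP => m; rewrite mcoeff_msupp eulerE => nz.
by apply: Hp; rewrite mcoeff_msupp; apply: contraNneq nz => ->; rewrite mul0rn.
Qed.

End EulerOperator.

Lemma map_euler (K1 K2 : comNzRingType) (f : {rmorphism K1 -> K2}) s a
    (p : {mpoly K1[s]}) :
  map_mpoly f (euler a p) = euler a (map_mpoly f p).
Proof.
by apply/mpolyP => m; rewrite mcoeff_map_mpoly !eulerE mcoeff_map_mpoly raddfMn.
Qed.

Section Vandermonde.
Variables (K : comNzRingType) (s : nat).
Implicit Types (X : 'I_s -> K) (l : 'I_s).

Definition vander X : K := \prod_(i < s) \prod_(j < s | (i < j)%N) (X i - X j).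

Lemma eq_vander X Y : X =1 Y -> vander X = vander Y.
Proof. by move=> XY; apply: eq_bigr => i _; apply: eq_bigr => j _; rewrite !XY. Qed.

(* What remains of the Vandermonde product after removing the factors involving l. *)
Definition vander_cofactor X l : K :=
  (-1) ^+ #|[pred i : 'I_s | (i < l)%N]| *
  \prod_(i < s | i != l) \prod_(j < s | (i < j)%N && (j != l)) (X i - X j).

Lemma vander_row_split X l (i : 'I_s) :
  \prod_(j < s | (i < j)%N) (X i - X j) =
  (\prod_(j < s | (i < j)%N && (j != l)) (X i - X j)) * (if (i < l)%N then X i - X l else 1).
Proof.
rewrite (bigID (fun j => j == l)) /= mulrC; congr (_ * _).
case: ltnP => [il|li].
  by rewrite (big_pred1 l) // => j /=; case: eqP => [->|]; rewrite ?il ?andbF.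
by rewrite big_pred0 // => j /=; case: eqP => [->|]; rewrite ?andbF // ltnNge li.
Qed.

Lemma node_prod_split X l :
  \prod_(j < s | j != l) (X l - X j) =
  (\prod_(j < s | (l < j)%N) (X l - X j)) * \prod_(j < s | (j < l)%N) (X l - X j).
Proof.
rewrite (bigID (fun j : 'I_s => (j < l)%N)) /= mulrC.
by congr (_ * _); apply: eq_bigl => j; rewrite -(inj_eq val_inj) /=; case: ltngtP.
Qed.

Lemma vander_factor X l :
  vander X = (\prod_(j < s | j != l) (X l - X j)) * vander_cofactor X l.
Proof.
rewrite /vander (bigD1 l) //= (eq_bigr _ (fun i _ => vander_row_split X l i)) big_split /=.
have -> : \prod_(i < s | i != l) (if (i < l)%N then X i - X l else 1) =
          (-1) ^+ #|[pred i : 'I_s | (i < l)%N]| * \prod_(j < s | (j < l)%N) (X l - X j).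
  rewrite -big_mkcondr /= (eq_bigl (fun i : 'I_s => (i < l)%N)); last first.
    by move=> i; case: eqP => [->|]; rewrite ?ltnn ?andbT.
  by rewrite -prodrN; apply: eq_bigr => i _; rewrite opprB.
by rewrite node_prod_split /vander_cofactor; ring.
Qed.

End Vandermonde.

Lemma rmorph_vander (K K' : comNzRingType) s (f : {rmorphism K -> K'}) (X : 'I_s -> K) :
  f (vander X) = vander (f \o X).
Proof.
rewrite rmorph_prod; apply: eq_bigr => i _; rewrite rmorph_prod.
by apply: eq_bigr => j _; rewrite rmorphB.
Qed.

Lemma rmorph_vander_cofactor (K K' : comNzRingType) s (f : {rmorphism K -> K'})
    (X : 'I_s -> K) l :
  f (vander_cofactor X l) = vander_cofactor (f \o X) l.
Proof.
rewrite rmorphM rmorphXn rmorphN1 rmorph_prod; congr (_ * _).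
by apply: eq_bigr => i _; rewrite rmorph_prod; apply: eq_bigr => j _; rewrite rmorphB.
Qed.

(* The numerators of the case q = 0 of the theorem. *)
Definition base_num (K : comNzRingType) s (X : 'I_s -> K) (l : 'I_s) : K :=
  X l ^+ (s - 2) * (\prod_(i < s | i != l) X i) * vander_cofactor X l.

Lemma rmorph_base_num (K K' : comNzRingType) s (f : {rmorphism K -> K'}) (X : 'I_s -> K) l :
  f (base_num X l) = base_num (f \o X) l.
Proof. by rewrite rmorphM rmorph_vander_cofactor rmorphM rmorphXn rmorph_prod. Qed.

(* The case q = 0 over a field: multiplying the composition sum by the
   Vandermonde product clears the partial-fraction denominators. *)
Lemma composition_sum_vander (F : fieldType) s eta (w : 'I_s -> F) :
  injective w -> (2 <= s)%N -> (s <= eta)%N ->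
  vander w * \sum_(x : {ffun 'I_s -> 'I_eta.+1} | composition x) \prod_(i < s) w i ^+ x i =
  \sum_(l < s) w l ^+ (eta + 2 - s) * base_num w l.
Proof.
move=> w_inj s2 se; rewrite composition_sum ?(leq_trans _ se) ?(leq_trans _ s2) //.
rewrite !mulr_sumr; apply: eq_bigr => l _.
rewrite (vander_factor w l) [\prod_(i < s) w i](bigD1 l) //= /base_num.
have -> : (eta + 2 - s = (eta - s).+2)%N by lia.
have -> : (eta.-1 = (eta - s).+1 + (s - 2))%N by lia.
have := node_prod_neq0 w_inj setT l; rewrite /node_prod.
rewrite (eq_bigl (fun j => j != l)) => [Pn0|j]; last by rewrite in_setT.
by rewrite exprD !exprS; move: (\prod_(j < s | j != l) _) Pn0 => P Pn0; field.
Qed.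

Lemma prod_homog (K : comNzRingType) s (I : finType) (P : pred I)
    (G : I -> {mpoly K[s]}) (d : I -> nat) :
  (forall i, P i -> G i \is (d i).-homog) ->
  \prod_(i | P i) G i \is (\sum_(i | P i) d i)%N.-homog.
Proof.
move=> H; apply: (big_ind2 (fun p e => p \is e.-homog)) => //; first exact: dhomog1.
by move=> p1 e1 p2 e2; apply: dhomogM.
Qed.

Lemma map_mpoly_homog (K1 K2 : nzRingType) (f : {additive K1 -> K2}) s d
    (p : {mpoly K1[s]}) :
  p \is d.-homog -> map_mpoly f p \is d.-homog.
Proof.
move=> /dhomogP Hp; apply/dhomogP => m; rewrite mcoeff_msupp mcoeff_map_mpoly => nz.
by apply: Hp; rewrite mcoeff_msupp; apply: contraNneq nz => ->; rewrite raddf0.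
Qed.

Lemma homog_Xsub (K : comNzRingType) s (i j : 'I_s) :
  ('X_i - 'X_j : {mpoly K[s]}) \is 1%N.-homog.
Proof. by rewrite rpredB // dhomogX /= mdeg1. Qed.

Lemma sum1_neq s (l : 'I_s) : (\sum_(i < s | i != l) 1)%N = s.-1.
Proof. by rewrite (eq_bigl (mem (predC1 l))) // sum1_card cardC1 card_ord. Qed.

Lemma sum_pairs s : (\sum_(i < s) \sum_(j < s | (i < j)%N) 1)%N = 'C(s, 2).
Proof.
rewrite (exchange_big_dep xpredT) //= -bin2_sum big_mkord; apply: eq_bigr => j _.
by rewrite (big_ord_narrow (ltnW (ltn_ord j))) sum1_card card_ord.
Qed.

Definition vanderX (K : comNzRingType) s : {mpoly K[s]} := vander (fun i => 'X_i).

Lemma vanderX_homog (K : comNzRingType) s : vanderX K s \is 'C(s, 2).-homog.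
Proof.
rewrite -sum_pairs; apply: prod_homog => i _; apply: prod_homog => j _.
exact: homog_Xsub.
Qed.

Lemma map_vanderX (K K' : comNzRingType) (f : {rmorphism K -> K'}) s :
  map_mpoly f (vanderX K s) = vanderX K' s.
Proof. by rewrite rmorph_vander; apply: eq_vander => i /=; rewrite map_mpolyX. Qed.

Lemma vanderX_eval (K : comNzRingType) s (w : 'I_s -> K) : (vanderX K s).@[w] = vander w.
Proof. by rewrite rmorph_vander; apply: eq_vander => i /=; rewrite mevalXU. Qed.

Lemma vander_neq0 (F : idomainType) s (w : 'I_s -> F) : injective w -> vander w != 0.
Proof.
move=> w_inj; apply/prodf_neq0 => i _; apply/prodf_neq0 => j ij; rewrite subr_eq0.
by apply: contraTneq ij => /w_inj ->; rewrite ltnn.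
Qed.

(* In characteristic zero, evaluating at the points 0, 1, ..., s-1 shows V != 0. *)
Lemma vanderX_neq0 (R : numDomainType) s : vanderX R s != 0.
Proof.
have w_inj : injective (fun i : 'I_s => (i : nat)%:R : R).
  by move=> i j /eqP; rewrite Num.Theory.eqr_nat => /eqP /val_inj.
by apply: contra_neq (vander_neq0 w_inj) => V0; rewrite -vanderX_eval V0 meval0.
Qed.

(* The cofactor of the Vandermonde polynomial is homogeneous: it is the
   quotient of V by the (s-1)-homogeneous node product. *)
Lemma cofactorX_homog (R : numDomainType) s (l : 'I_s) :
  vander_cofactor (fun i => 'X_i : {mpoly R[s]}) l \is ('C(s, 2) - s.-1).-homog.
Proof.
set G := vander_cofactor _ l.
have [d Gd] : exists d, G \is d.-homog.
  eexists; apply: dhomogM; first by apply: dhomogMn; rewrite dhomogN; exact: dhomog1.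
  by apply: prod_homog => i _; apply: prod_homog => j _; apply: homog_Xsub.
have Pd : \prod_(j < s | j != l) ('X_l - 'X_j : {mpoly R[s]}) \is s.-1.-homog.
  rewrite -(sum1_neq l); apply: prod_homog => j _; exact: homog_Xsub.
have := dhomog_uniq (vanderX_neq0 R s) (vanderX_homog R s).
by rewrite /vanderX (vander_factor _ l) => /(_ _ (dhomogM Pd Gd)) ->; rewrite addKn.
Qed.

Lemma base_numX_homog (R : numDomainType) s (l : 'I_s) : (2 <= s)%N ->
  base_num (fun i => 'X_i : {mpoly R[s]}) l \is ('C(s, 2) + s - 2)%N.-homog.
Proof.
move=> s2; have Xd (i : 'I_s) : ('X_i : {mpoly R[s]}) \is 1%N.-homog.
  by rewrite dhomogX /= mdeg1.
have le_s_C : (s.-1 <= 'C(s, 2))%N.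
  by case: s s2 l {Xd} => [|[|s']] // _ _; rewrite binS bin1 leq_addl.
have -> : ('C(s, 2) + s - 2 =
    1 * (s - 2) + (\sum_(i < s | i != l) 1) + ('C(s, 2) - s.-1))%N by rewrite sum1_neq; lia.
apply: dhomogM (cofactorX_homog R l).
exact: dhomogM (dhomogMn _ (Xd l)) (prod_homog (fun i _ => Xd i)).
Qed.

Section CompositionPolynomial.
Variables (R : idomainType) (s : nat).
Local Notation "x %:F" := (@FracField.tofrac _ x).

Definition comp_poly eta (al : seq 'I_s) : {mpoly R[s]} :=
  \sum_(x : {ffun 'I_s -> 'I_eta.+1} | composition x)
    (\prod_(a <- al) (x a : nat)%:R) *: 'X_[[multinom (x i : nat) | i < s]].

Lemma comp_poly_cons eta a al : comp_poly eta (a :: al) = euler a (comp_poly eta al).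
Proof.
rewrite /comp_poly euler_sum; apply: eq_bigr => x _.
by rewrite eulerZ euler_monom scalerA big_cons mnmE mulrC.
Qed.

Lemma X_tofrac_inj : injective (fun i : 'I_s => ('X_i : {mpoly R[s]})%:F).
Proof.
move=> i j /eqP; rewrite tofrac_eq => /eqP /(congr1 (mcoeff U_(i))).
rewrite !mcoeffXU eqxx; case: eqP => [//|_] /eqP.
by rewrite oner_eq0.
Qed.

(* The case q = 0 of the theorem, as an identity of polynomials: it is
   composition_sum_vander in the field of rational functions. *)
Lemma comp_poly_base eta : (2 <= s)%N -> (s <= eta)%N ->
  vanderX R s * comp_poly eta [::] =
  \sum_(l < s) 'X_l ^+ (eta + 2 - s) * base_num (fun i => 'X_i) l.
Proof.
move=> s2 se; apply/eqP; rewrite -tofrac_eq; apply/eqP.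
rewrite rmorphM rmorph_vander !rmorph_sum.
under [RHS]eq_bigr do rewrite rmorphM rmorphXn rmorph_base_num.
rewrite -(composition_sum_vander X_tofrac_inj) //; congr (_ * _).
apply: eq_bigr => x _; rewrite big_nil scale1r mpolyXE_id rmorph_prod.
by apply: eq_bigr => i _; rewrite rmorphXn mnmE.
Qed.

End CompositionPolynomial.

Arguments comp_poly {R s} eta al.

Section CoefficientDegree.
Variables (R : comNzRingType) (s : nat).
Implicit Types (p q : {mpoly {poly R}[s]}).

(* All coefficients of p, which are polynomials in eta, have fewer than d terms. *)
Definition coef_deg_lt d p := forall m, (size p@_m <= d)%N.

Lemma coef_deg_lt0 d : coef_deg_lt d 0.
Proof. by move=> m; rewrite mcoeff0 size_poly0. Qed.

Lemma coef_deg_ltW d e p : (d <= e)%N -> coef_deg_lt d p -> coef_deg_lt e p.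
Proof. by move=> de hp m; apply: leq_trans de. Qed.

Lemma coef_deg_ltB d p q : coef_deg_lt d p -> coef_deg_lt d q -> coef_deg_lt d (p - q).
Proof.
move=> hp hq m; rewrite mcoeffB; apply: leq_trans (size_polyD _ _) _.
by rewrite size_polyN geq_max hp hq.
Qed.

Lemma coef_deg_ltD d p q : coef_deg_lt d p -> coef_deg_lt d q -> coef_deg_lt d (p + q).
Proof.
move=> hp hq; rewrite -[q]opprK; apply: coef_deg_ltB => // m.
by rewrite mcoeffN size_polyN.
Qed.

Lemma coef_deg_ltMn d p k : coef_deg_lt d p -> coef_deg_lt d (p *+ k).
Proof. by move=> hp m; rewrite mcoeffMn -scaler_nat; apply: leq_trans (size_scale_leq _ _) _. Qed.

Lemma coef_deg_lt_euler d a p : coef_deg_lt d p -> coef_deg_lt d (euler a p).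
Proof. by move=> hp m; rewrite eulerE -scaler_nat; apply: leq_trans (size_scale_leq _ _) _. Qed.

Lemma coef_deg_lt_polyC (r : {mpoly R[s]}) : coef_deg_lt 1 (map_mpoly polyC r).
Proof. by move=> m; rewrite mcoeff_map_mpoly size_polyC_leq1. Qed.

Lemma coef_deg_lt_mulC d (r : {mpoly R[s]}) p :
  coef_deg_lt d p -> coef_deg_lt d (map_mpoly polyC r * p).
Proof.
move=> hp m; rewrite mcoeffM; apply: leq_trans (size_sum _ _ _) _.
apply/bigmax_leqP => k _; rewrite mcoeff_map_mpoly.
apply: leq_trans (size_polyMleq _ _) _.
by rewrite -subn1 leq_subLR; apply: leq_add; [exact: size_polyC_leq1 | exact: hp].
Qed.

Lemma coef_deg_lt_mulN d (N : {poly R}) p :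
  (size N <= 2)%N -> coef_deg_lt d p -> coef_deg_lt d.+1 (N%:MP * p).
Proof.
move=> hN hp m; rewrite mcoeffCM; apply: leq_trans (size_polyMleq _ _) _.
by rewrite -subn1 leq_subLR add1n -add2n; apply: leq_add.
Qed.

End CoefficientDegree.

Section Induction.
Variables (R : numDomainType) (s : nat).
Hypothesis s2 : (2 <= s)%N.
Local Notation A := {poly R}.
Local Notation V := (vanderX R s).
Local Notation ev eta := (map_mpoly (horner_eval (eta%:R : R))).

Definition represents (al : seq 'I_s) (F : 'I_s -> {mpoly A[s]}) :=
  [/\ forall l, F l \is (2 ^ size al * 'C(s, 2) + s - 2)%N.-homog,
      forall l, coef_deg_lt (size al).+1 (F l) &
      forall eta, (s <= eta)%N ->
        V ^+ (2 ^ size al) * comp_poly eta al =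
        \sum_(l < s) 'X_l ^+ (eta + 2 - s) * ev eta (F l)].

Lemma represents_nil :
  represents [::] (fun l => map_mpoly polyC (base_num (fun i => 'X_i) l)).
Proof.
split => /= [l|l|eta se]; first by rewrite expn0 mul1n map_mpoly_homog ?base_numX_homog.
  exact: coef_deg_lt_polyC.
rewrite expr1 comp_poly_base //; apply: eq_bigr => l _; congr (_ * _).
by apply/mpolyP => m; rewrite !mcoeff_map_mpoly /= horner_evalE hornerC.
Qed.

Definition eta_shift : {mpoly A[s]} := ('X + (2 - s%:R)%:P)%:MP.

Lemma ev_eta_shift eta : (s <= eta + 2)%N -> ev eta eta_shift = (eta + 2 - s)%N%:R%:MP.
Proof.
move=> h; rewrite map_mpolyC /= horner_evalE hornerD hornerX hornerC.
by rewrite natrB // natrD addrA.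
Qed.

(* The numerators for a :: al, built from those F for al (with |al| = k and
   K = 2^k) by the quotient rule for E_a, as n = eta + 2 - s:
   E_a (X_l^n F_l / V^K)
     = X_l^n [V^K ([a = l] n F_l + E_a F_l) - K V^(K-1) E_a(V) F_l] / V^(2K). *)
Definition step_num (k : nat) (a : 'I_s) (F : 'I_s -> {mpoly A[s]}) (l : 'I_s) :
    {mpoly A[s]} :=
  vanderX A s ^+ (2 ^ k) * ((if a == l then eta_shift * F l else 0) + euler a (F l))
  - (vanderX A s ^+ (2 ^ k).-1 * euler a (vanderX A s) * F l) *+ 2 ^ k.

(* The degree grows by K * C(s,2) = 2^(k+1) C(s,2) - 2^k C(s,2). *)
Lemma step_num_homog k a F l :
  F l \is (2 ^ k * 'C(s, 2) + s - 2)%N.-homog ->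
  step_num k a F l \is (2 ^ k.+1 * 'C(s, 2) + s - 2)%N.-homog.
Proof.
move=> Fd; have K0 : (0 < 2 ^ k)%N by rewrite expn_gt0.
have Vd := vanderX_homog A s; apply: dhomogD.
  have -> : (2 ^ k.+1 * 'C(s, 2) + s - 2 = 'C(s, 2) * 2 ^ k + (2 ^ k * 'C(s, 2) + s - 2))%N.
    by rewrite expnS; lia.
  apply: dhomogM; first exact: dhomogMn.
  apply: dhomogD; last exact: euler_homog.
  case: (a == l); last exact: dhomog0.
  have Nd : eta_shift \is 0%N.-homog.
    by rewrite -[eta_shift]mulr1 mul_mpolyC dhomogZ ?dhomog1.
  by have := dhomogM Nd Fd; rewrite add0n.
rewrite dhomogN -scaler_nat dhomogZ //.
have -> : (2 ^ k.+1 * 'C(s, 2) + s - 2 =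
    ('C(s, 2) * (2 ^ k).-1 + 'C(s, 2)) + (2 ^ k * 'C(s, 2) + s - 2))%N.
  by rewrite expnS; move: K0; move: (2 ^ k)%N => K K0; rewrite -subn1; nia.
by apply: dhomogM => //; apply: dhomogM; [exact: dhomogMn | exact: euler_homog].
Qed.

(* Only the factor eta_shift raises the degree in eta, by one. *)
Lemma step_num_coef_deg k a F l d :
  coef_deg_lt d (F l) -> coef_deg_lt d.+1 (step_num k a F l).
Proof.
move=> Fc; rewrite /step_num -(@map_vanderX _ _ polyC s).
apply: coef_deg_ltB.
  rewrite -rmorphXn; apply: coef_deg_lt_mulC; apply: coef_deg_ltD.
    case: (a == l); last exact: coef_deg_lt0.
    by apply: coef_deg_lt_mulN => //; rewrite size_XaddC.
  by apply: coef_deg_ltW (leqnSn _) _; apply: coef_deg_lt_euler.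
apply: coef_deg_ltMn; rewrite -rmorphXn -map_euler -rmorphM.
by apply: coef_deg_lt_mulC; apply: coef_deg_ltW (leqnSn _) _.
Qed.

Lemma ev_step_num eta k a F l : (s <= eta)%N ->
  'X_l ^+ (eta + 2 - s) * ev eta (step_num k a F l) =
  V ^+ (2 ^ k) * (euler a ('X_l ^+ (eta + 2 - s)) * ev eta (F l)
                + 'X_l ^+ (eta + 2 - s) * euler a (ev eta (F l)))
  - (V ^+ (2 ^ k).-1 * euler a V) *+ 2 ^ k * ('X_l ^+ (eta + 2 - s) * ev eta (F l)).
Proof.
move=> se; rewrite /step_num.
(* E_a must commute with evaluation before rmorphM can unfold it. *)
have eF := map_euler (horner_eval (eta%:R : R)) a (F l).
have eV := map_euler (horner_eval (eta%:R : R)) a (vanderX A s).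
move: (euler a (F l)) (euler a (vanderX A s)) eF eV => EF EV eF eV.
rewrite rmorphB rmorphMn !rmorphM rmorphD !rmorphXn /= eF eV map_vanderX.
rewrite (fun_if (ev eta)) rmorph0 rmorphM /= ev_eta_shift ?(leq_trans se (leq_addr _ _)) //.
rewrite euler_Xn eq_sym; case: eqP => _ /=.
  by rewrite mul1n -mul_mpolyC; set K := (2 ^ k)%N; ring.
by rewrite mul0n scale0r mul0r; set K := (2 ^ k)%N; ring.
Qed.

Lemma represents_cons al a F :
  represents al F -> represents (a :: al) (step_num (size al) a F).
Proof.
case=> Fd Fc Fid; split => /= [l|l|eta se]; first exact: step_num_homog.
  exact: step_num_coef_deg.
have K0 : (0 < 2 ^ size al)%N by rewrite expn_gt0.
rewrite (eq_bigr _ (fun l _ => @ev_step_num eta (size al) a F l se)).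
rewrite sumrB -!mulr_sumr -Fid //.
have -> : \sum_(l < s) (euler a ('X_l ^+ (eta + 2 - s)) * ev eta (F l)
    + 'X_l ^+ (eta + 2 - s) * euler a (ev eta (F l))) =
    euler a (V ^+ (2 ^ size al) * comp_poly eta al).
  by rewrite Fid // euler_sum; apply: eq_bigr => l _; rewrite eulerM.
have EVK : euler a (V ^+ (2 ^ size al)) =
    (V ^+ (2 ^ size al).-1 * euler a V) *+ 2 ^ size al.
  by rewrite -{1}(prednK K0) eulerXn prednK.
rewrite comp_poly_cons eulerM EVK expnS mul2n -addnn exprD.
by set K := (2 ^ size al)%N; ring.
Qed.

Lemma represents_exists al : exists F, represents al F.
Proof.
elim: al => [|a al [F HF]]; first by eexists; apply: represents_nil.
by exists (step_num (size al) a F); apply: represents_cons.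
Qed.

End Induction.

Lemma comp_poly_eval (R : idomainType) s q eta (alpha : 'I_q -> 'I_s) (w : 'I_s -> R) :
  (comp_poly eta (map alpha (enum 'I_q))).@[w] =
  \sum_(x : {ffun 'I_s -> 'I_eta.+1} | composition x)
     (\prod_(j < q) (x (alpha j) : nat)%:R) * \prod_(i < s) w i ^+ x i.
Proof.
rewrite rmorph_sum /=; apply: eq_bigr => x _.
rewrite mevalZ mevalX big_map big_enum /=; congr (_ * _).
by apply: eq_bigr => i _; rewrite mnmE.
Qed.

Theorem lemmaA2 (s q : nat) (alpha : 'I_q -> 'I_s) :
  (2 <= s)%N ->
  exists f : 'I_s -> {mpoly {poly Rr}[s]},
    (forall l, f l \is (2 ^ q * 'C(s, 2) + s - 2)%N.-homog) /\
    (forall l (m : 'X_{1..s}), (size ((f l)@_m) <= q.+1)%N) /\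
    (forall eta : nat, (s <= eta)%N ->
      forall w : 'I_s -> Rr, injective w ->
        lhsA2 eta alpha w =
        (\sum_(l < s) w l ^+ (eta + 2 - s) * evalEW (f l) (eta%:R) w)
          / (vdm w) ^+ (2 ^ q)).
Proof.
move=> s2; have [F [Fd Fc Fid]] := represents_exists Rr s2 (map alpha (enum 'I_q)).
rewrite size_map size_enum_ord in Fd Fc Fid.
exists F; split => //; split => // eta se w w_inj.
have Vn0 : vdm w ^+ (2 ^ q) != 0 by rewrite expf_neq0 // vander_neq0.
apply: (mulfI Vn0); rewrite mulrCA divff // mulr1 /lhsA2 -comp_poly_eval.
have := congr1 (meval w) (Fid eta se).
rewrite rmorphM rmorphXn /= vanderX_eval => ->.
rewrite rmorph_sum; apply: eq_bigr => l _.
by rewrite rmorphM rmorphXn /= mevalXU.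
Qed.
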